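(* Fix $0<d<1$ and let $c(x)=x^d$. For common slot instances, the price of anarchy of the coordination mechanism described in the context is $\Theta(1)$; that is, there is a constant $K_d$ depending only on $d$ such that for every common slot instance with cost function $c$ and every Nash equilibrium $(s,\xi)$ of the mechanism, $C(s)\le K_d\cdot\min_{s^*}C(s^* )$.
   Context: A game consists of a cost function $c$ (here $c(x)=x^d$, $c(0)=0$), slots $t=1,\dots,T$, and a set of jobs, each job $j$ having integer release time $r_j$ and deadline $d_j$ with $0<r_j<d_j<T$. A common slot instance is one in which some slot lies in $[r_j,d_j)$ for every job $j$ (equivalently, an optimal assignment uses a single slot). An assignment $s$ gives each job a slot $s_j$ with $r_j\le s_j<d_j$; the load is $l_t(s)=|\{j:s_j=t\}|$ and $C(s)=\sum_{t=1}^T c(l_t(s))$; the minimum is over all assignments. In the coordination mechanism, each job $j$ chooses a pair $(s_j,\xi_j)$ with $s_j\in[r_j,d_j)$ and payment $\xi_j\ge0$. Slot $t$ is opened iff $\sum_{j:s_j=t}\xi_j\ge c(l_t(s))$; a job whose slot is not opened has infinite cost, otherwise its cost is $\xi_j$. A profile $(s,\xi)$ is a Nash equilibrium if for every job $j$: (i) $\sum_{j':s_{j'}=s_j}\xi_{j'}\ge c(l_{s_j}(s))$; (ii) for every $t\in[r_j,d_j)\setminus\{s_j\}$, $\xi_j\le\max\{0,\,c(l_t(s)+1)-\sum_{j':s_{j'}=t}\xi_{j'}\}$; (iii) $\xi_j\le\max\{0,\,c(l_{s_j}(s))-\sum_{j':s_{j'}=s_j,\,j'\ne j}\xi_{j'}\}$.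 *)

From HB Require Import structures.
From mathcomp Require Import all_boot all_order all_algebra.
From mathcomp Require Import reals exp.
Set Implicit Arguments. Unset Strict Implicit. Unset Printing Implicit Defensive.
Import Order.TTheory GRing.Theory Num.Theory.
Local Open Scope ring_scope.

(* Cost function c(x) = x^d on natural loads; note powR 0 d = 0 for d <> 0,
   so c(0) = 0 when 0 < d. *)
Definition cost {R : realType} (d : R) (x : nat) : R := (x%:R : R) `^ d.

Definition valid_instance (n T : nat) (r dl : 'I_n -> nat) : Prop :=
  forall j, (0 < r j)%N /\ (r j < dl j)%N /\ (dl j < T)%N.

Definition common_slot (n T : nat) (r dl : 'I_n -> nat) : Prop :=
  exists t : nat, forall j, (r j <= t)%N /\ (t < dl j)%N.

Definition feasible (n : nat) (r dl : 'I_n -> nat) (s : 'I_n -> nat) : Prop :=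
  forall j, (r j <= s j)%N /\ (s j < dl j)%N.

Definition load (n : nat) (s : 'I_n -> nat) (t : nat) : nat :=
  #|[set j : 'I_n | s j == t]|.

Definition total_cost {R : realType} (d : R) (n T : nat) (s : 'I_n -> nat) : R :=
  \sum_(1 <= t < T.+1) cost d (load s t).

Definition paid {R : realType} (n : nat) (s : 'I_n -> nat) (xi : 'I_n -> R) (t : nat) : R :=
  \sum_(j' : 'I_n | s j' == t) xi j'.

Definition nash_eq {R : realType} (d : R) (n : nat) (r dl : 'I_n -> nat)
    (s : 'I_n -> nat) (xi : 'I_n -> R) : Prop :=
  feasible r dl s /\
  (forall j, 0 <= xi j) /\
  forall j,
    (* (i) the slot of j is opened *)
    cost d (load s (s j)) <= paid s xi (s j) /\
    (* (ii) no profitable deviation to another slot *)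
    (forall t, (r j <= t)%N -> (t < dl j)%N -> t <> s j ->
       xi j <= Num.max 0 (cost d (load s t).+1 - paid s xi t)) /\
    (* (iii) no overpayment *)
    xi j <= Num.max 0 (cost d (load s (s j)) -
                       \sum_(j' : 'I_n | (s j' == s j) && (j' != j)) xi j').

From HB Require Import structures.
From mathcomp Require Import all_boot all_order all_algebra.
From mathcomp Require Import reals exp.
From mathcomp Require Import ring lra zify.
Import Order.TTheory GRing.Theory Num.Theory.
Local Open Scope ring_scope.
Set Implicit Arguments. Unset Strict Implicit.

(* Let q = d ^ (d / (1 - d)) < 1.  In an equilibrium every used slot is paid
   for, and a job on slot t that may move to a slot t' with load l' > 0 pays at
   most the marginal cost c(l' + 1) - c(l') <= d c(l') / l' of joining t'.
   Hence c(l_t) <= l_t d c(l') / l', which forces c(l') <= q c(l_t).  With a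
   common slot t0, every job on t may move to any slot between t and t0, so
   slot costs decay geometrically towards t0 from any used slot; as every slot
   costs at most c(n), C(s) <= (1 + 2 / (1 - q)) c(n).  Concavity of c gives
   c(n) <= C(s') for every assignment s'. *)

Section PowerCost.
Variables (R : realType) (d : R).
Hypotheses (d_gt0 : 0 < d) (d_lt1 : d < 1).

Let d1_gt0 : 0 < 1 - d. Proof. by rewrite subr_gt0. Qed.

Lemma powR_addr1_le (y : R) : 0 < y -> (y + 1) `^ d <= y `^ d + d * y `^ d / y.
Proof.
move=> y_gt0; have yd_gt0 : 0 < y `^ d by rewrite powR_gt0.
have young : (y + 1) `^ d * (y / y `^ d) <= y + d.
  have p_gt0 : 0 < d^-1 by rewrite invr_gt0.
  have q_gt0 : 0 < (1 - d)^-1 by rewrite invr_gt0.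
  have pq : d^-1^-1 + (1 - d)^-1^-1 = 1 by rewrite !invrK addrC subrK.
  have := conjugate_powR (powR_ge0 (y + 1) d) (powR_ge0 y (1 - d)) p_gt0 q_gt0 pq.
  have y1_ge0 : 0 <= y + 1 by rewrite addr_ge0 // ltW.
  rewrite -!powRrM !mulfV ?gt_eqF // !powRr1 // ?(ltW y_gt0) // !invrK.
  rewrite powRB ?gt_eqF ?implybT // powRr1 ?(ltW y_gt0) //.
  by move/le_trans; apply; lra.
rewrite (_ : y `^ d + d * y `^ d / y = (y + d) / (y / y `^ d)); last first.
  by field; rewrite !gt_eqF.
by rewrite ler_pdivlMr ?divr_gt0.
Qed.

Definition decay : R := d `^ (d / (1 - d)).

Lemma decay_ge0 : 0 <= decay. Proof. exact: powR_ge0. Qed.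

Lemma decay_lt1 : decay < 1.
Proof.
have e_gt0 : 0 < d / (1 - d) by rewrite divr_gt0.
have := gt0_ltr_powR e_gt0 (x := d) (y := 1).
by rewrite powR1; apply; rewrite // nnegrE ltW.
Qed.

Lemma powR_le_decay (y y' : R) : 0 < y -> 0 < y' ->
  y `^ d <= y * (d * y' `^ d / y') -> y' `^ d <= decay * y `^ d.
Proof.
move=> y_gt0 y'_gt0 yd_le; have yd_gt0 : 0 < y `^ d by rewrite powR_gt0.
have [x x_gt0 ey'] : exists2 x, 0 < x & y' = x * y.
  by exists (y' / y); rewrite ?divr_gt0 ?divfK ?gt_eqF.
rewrite ey' !powRM ?(ltW x_gt0) ?(ltW y_gt0) // in yd_le *.
rewrite ler_pM2r //.
have x_le : x <= d * x `^ d.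
  rewrite -(ler_pM2l yd_gt0).
  rewrite (_ : y `^ d * (d * x `^ d)
             = y * (d * (x `^ d * y `^ d) / (x * y)) * x); last first.
    by field; rewrite !gt_eqF.
  by apply: ler_wpM2r => //; exact: ltW.
have x1d_le : x `^ (1 - d) <= d.
  by rewrite powRB ?gt_eqF ?implybT // powRr1 ?(ltW x_gt0) // ler_pdivrMr ?powR_gt0.
have -> : x `^ d = (x `^ (1 - d)) `^ (d / (1 - d)).
  by rewrite -powRrM; congr (_ `^ _); field; rewrite gt_eqF.
by apply: ge0_ler_powR; rewrite ?divr_ge0 ?nnegrE ?powR_ge0 // ltW.
Qed.

Lemma cost0 : cost d 0 = 0.
Proof. by rewrite /cost powR0 // gt_eqF. Qed.

Lemma cost_ge0 l : 0 <= cost d l.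
Proof. exact: powR_ge0. Qed.

Lemma cost_gt0 l : (0 < cost d l) = (0 < l)%N.
Proof. by case: l => [|l]; rewrite ?cost0 ?ltxx // powR_gt0 ?ltr0n. Qed.

Lemma cost_le : {homo cost d : l l' / (l <= l')%N >-> l <= l'}.
Proof. by move=> l l' ll'; rewrite ge0_ler_powR ?(ltW d_gt0) ?nnegrE ?ler_nat. Qed.

Lemma cost_succ_sub_le l : (0 < l)%N -> cost d l.+1 - cost d l <= d * cost d l / l%:R.
Proof. by move=> l_gt0; rewrite lerBlDl /cost -natr1 powR_addr1_le ?ltr0n. Qed.

Lemma cost_ge_frac l n : (l <= n)%N -> l%:R / n%:R * cost d n <= cost d l.
Proof.
case: l => [|l] ln; first by rewrite !mul0r cost_ge0.
have n_gt0 : (0 < n%:R :> R) by rewrite ltr0n (leq_trans _ ln).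
have -> : cost d l.+1 = (l.+1%:R / n%:R) `^ d * cost d n.
  by rewrite /cost -powRM ?divr_ge0 // divfK // gt_eqF.
have frac_le1 : l.+1%:R / n%:R <= 1 :> R by rewrite ler_pdivrMr // mul1r ler_nat.
rewrite ler_wpM2r ?cost_ge0 // ger1_powR ?(ltW d_lt1) // frac_le1 andbT.
by rewrite divr_gt0 // ltr0n.
Qed.

End PowerCost.

Section Loads.
Variables (n : nat) (s : 'I_n -> nat).

Lemma load_le t : (load s t <= n)%N.
Proof. by rewrite (leq_trans (max_card _)) ?card_ord. Qed.

Lemma load_gt0P t : reflect (exists j, s j = t) (0 < load s t)%N.
Proof.
rewrite /load card_gt0; apply: (iffP (set0Pn _)) => [[j]|[j <-]].
  by rewrite inE => /eqP; exists j.
by exists j; rewrite inE.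
Qed.

Lemma sum_load T : (forall j, (0 < s j <= T)%N) ->
  (\sum_(1 <= t < T.+1) load s t)%N = n.
Proof.
move=> s_range; rewrite /load.
under eq_bigr do rewrite -sum1dep_card.
rewrite (exchange_big_dep xpredT) //=.
rewrite -[RHS]card_ord -sum1_card; apply: eq_bigr => j _.
under eq_bigl do rewrite eq_sym.
by rewrite big_nat1_eq s_range.
Qed.

Lemma paid_le (R : realType) (xi : 'I_n -> R) t (M : R) :
  (forall j, s j = t -> xi j <= M) -> paid s xi t <= (load s t)%:R * M.
Proof.
move=> xi_le; rewrite /paid /load -sum1dep_card natr_sum mulr_suml.
by apply: ler_sum => j /eqP sj; rewrite mul1r xi_le.
Qed.

End Loads.

Lemma cost_card_le_total_cost (R : realType) (d : R) n T (s : 'I_n -> nat) :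
  0 < d -> d < 1 -> (forall j, (0 < s j <= T)%N) -> cost d n <= total_cost d T s.
Proof.
move=> d_gt0 d_lt1 s_range; have [n0|n_gt0] := posnP n.
  rewrite (_ : cost d n = 0); last by rewrite n0 cost0.
  by rewrite sumr_ge0 // => t _; apply: cost_ge0.
rewrite /total_cost.
apply: (le_trans _ (ler_sum _ (fun t _ => cost_ge_frac d_lt1 (load_le s t)))).
by rewrite -!mulr_suml -natr_sum sum_load // mulfV ?mul1r // pnatr_eq0 -lt0n.
Qed.

Lemma sum_decay_right_le (R : realType) (f : nat -> R) (q m : R) (a b : nat) :
  0 <= q -> q < 1 -> 0 <= m -> (forall t, (a <= t < b)%N -> 0 <= f t <= m) ->
  (forall t t', (a <= t)%N -> (t < t' < b)%N -> 0 < f t -> f t' <= q * f t) ->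
  \sum_(a <= t < b) f t <= m / (1 - q).
Proof.
move=> q_ge0 q_lt1 m_ge0 f_bound; have q1_gt0 : 0 < 1 - q by rewrite subr_gt0.
have [k] := ubnP (b - a); elim: k a m m_ge0 f_bound => // k IH a m m_ge0 f_bound.
move=> bak f_decay.
have [ba|ab] := leqP b a; first by rewrite big_geq // divr_ge0 // ltW.
have /andP[fa_ge0 fa_le] : 0 <= f a <= m by apply: f_bound; lia.
rewrite big_ltn //; have [fa_gt0|fa_le0] := ltP 0 (f a); last first.
  have -> : f a = 0 by apply/eqP; rewrite eq_le fa_le0.
  rewrite add0r; apply: IH => //.
  - by move=> t tab; apply: f_bound; lia.
  - lia.
  - by move=> t t' at' tt' ft; apply: f_decay => //; lia.
have tail : \sum_(a.+1 <= t < b) f t <= q * f a / (1 - q).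
  apply: IH; first exact: mulr_ge0.
  - move=> t tab; have /andP[-> _] : 0 <= f t <= m by apply: f_bound; lia.
    by apply: f_decay => //; lia.
  - lia.
  - by move=> t t' at' tt' ft; apply: f_decay => //; lia.
apply: le_trans (lerD (lexx (f a)) tail) _.
rewrite (_ : f a + q * f a / (1 - q) = f a / (1 - q)); last by field; rewrite gt_eqF.
by rewrite ler_pM2r ?invr_gt0.
Qed.

Lemma sum_decay_left_le (R : realType) (f : nat -> R) (q m : R) (a b : nat) :
  0 <= q -> q < 1 -> 0 <= m -> (forall t, (a <= t < b)%N -> 0 <= f t <= m) ->
  (forall t t', (t' < t)%N -> (a <= t')%N -> (t < b)%N -> 0 < f t -> f t' <= q * f t) ->
  \sum_(a <= t < b) f t <= m / (1 - q).
Proof.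
move=> q_ge0 q_lt1 m_ge0 f_bound f_decay; rewrite big_nat_rev /=.
apply: (sum_decay_right_le (f := fun t => f (a + b - t.+1)%N)) => // t.
  by move=> tab; apply: f_bound; lia.
by move=> t' ta tt' ft; apply: f_decay => //; lia.
Qed.

Section Equilibrium.
Variables (R : realType) (d : R) (n : nat) (r dl s : 'I_n -> nat) (xi : 'I_n -> R).
Hypotheses (d_gt0 : 0 < d) (d_lt1 : d < 1) (nash : nash_eq d r dl s xi).

Lemma nash_cost_le_paid t : cost d (load s t) <= paid s xi t.
Proof.
have [->|/load_gt0P[j <-]] := posnP (load s t).
  by rewrite cost0 // sumr_ge0 // => j _; apply: nash.2.1.
exact: (nash.2.2 j).1.
Qed.

Lemma nash_pay_le_marginal j t : (r j <= t < dl j)%N -> t != s j ->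
  xi j <= cost d (load s t).+1 - cost d (load s t).
Proof.
move=> /andP[rt tdl] /eqP t_ne; apply: le_trans ((nash.2.2 j).2.1 t rt tdl t_ne) _.
by rewrite ge_max subr_ge0 cost_le // lerD2l lerN2 nash_cost_le_paid.
Qed.

Lemma nash_cost_decay t t' : (0 < load s t)%N ->
  (forall j, s j = t -> (r j <= t' < dl j)%N) -> t' != t ->
  cost d (load s t') <= decay d * cost d (load s t).
Proof.
move=> l_gt0 t'_reachable t'_ne.
have [->|l'_gt0] := posnP (load s t').
  by rewrite cost0 // mulr_ge0 ?decay_ge0 ?cost_ge0.
apply: powR_le_decay; rewrite ?ltr0n //.
have xi_le j : s j = t -> xi j <= d * cost d (load s t') / (load s t')%:R.
  move=> sj; apply: le_trans (cost_succ_sub_le d_gt0 d_lt1 l'_gt0).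
  by apply: nash_pay_le_marginal; rewrite ?t'_reachable ?sj.
exact: le_trans (nash_cost_le_paid t) (paid_le xi_le).
Qed.

End Equilibrium.

Lemma nash_total_cost_le (R : realType) (d : R) n T (r dl s : 'I_n -> nat)
    (xi : 'I_n -> R) :
  0 < d -> d < 1 -> valid_instance T r dl -> common_slot T r dl ->
  nash_eq d r dl s xi ->
  total_cost d T s <= (1 + 2 / (1 - decay d)) * cost d n.
Proof.
move=> d_gt0 d_lt1 valid [t0 t0_common] nash.
set q := decay d; have q_ge0 : 0 <= q := decay_ge0 d.
have q_lt1 : q < 1 := decay_lt1 d_gt0 d_lt1.
have q1_gt0 : 0 < 1 - q by rewrite subr_gt0.
have [n0|n_gt0] := posnP n.
  rewrite /total_cost big1 ?mulr_ge0 ?cost_ge0 ?addr_ge0 ?divr_ge0 ?ltW // => t _.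
  have /eqP-> : load s t == 0%N by rewrite -leqn0 -n0 load_le.
  exact: cost0.
have t0_slot : (0 < t0 < T)%N.
  by have := valid (Ordinal n_gt0); have := t0_common (Ordinal n_gt0); lia.
pose f t := cost d (load s t); pose c := cost d n.
have c_ge0 : 0 <= c := cost_ge0 d n.
have f_bound t : 0 <= f t <= c by rewrite cost_ge0 cost_le // load_le.
have f_decay t t' : 0 < f t -> (minn t t0 <= t' <= maxn t t0)%N -> t' != t ->
    f t' <= q * f t.
  rewrite cost_gt0 // => l_gt0 t'_between.
  apply: (nash_cost_decay d_gt0 d_lt1 nash) => // j sj.
  have [rj jdl] := nash.1 j; have [rt0 t0dl] := t0_common j.
  by rewrite sj in rj jdl; lia.
have left : \sum_(1 <= t < t0) f t <= c / (1 - q).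
  apply: sum_decay_right_le => // t t' _ tt't0 ft.
  by apply: f_decay => //; lia.
have right : \sum_(t0.+1 <= t < T.+1) f t <= c / (1 - q).
  apply: sum_decay_left_le => // t t' t't t0t' tT ft.
  by apply: f_decay => //; lia.
have [t0_gt0 t0_lt] : (0 < t0)%N /\ (t0 < T.+1)%N by lia.
rewrite /total_cost (big_cat_nat (n := t0)) ?(big_ltn (m := t0)) ?(ltnW t0_lt) //=.
rewrite (_ : (1 + 2 / (1 - q)) * c = c / (1 - q) + (c + c / (1 - q))); last first.
  by field; rewrite gt_eqF.
have /andP[_ ft0_le] := f_bound t0.
exact: lerD left (lerD ft0_le right).
Qed.

Theorem theorem5 (R : realType) (d : R) (hd0 : 0 < d) (hd1 : d < 1) :
  exists K : R, forall (n T : nat) (r dl : 'I_n -> nat),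
    valid_instance T r dl -> common_slot T r dl ->
    forall (s : 'I_n -> nat) (xi : 'I_n -> R),
      nash_eq d r dl s xi ->
      forall sstar : 'I_n -> nat, feasible r dl sstar ->
        total_cost d T s <= K * total_cost d T sstar.
Proof.
have q1_gt0 : 0 < 1 - decay d by rewrite subr_gt0 decay_lt1.
exists (1 + 2 / (1 - decay d)) => n T r dl valid common s xi nash sstar sstar_feasible.
apply: le_trans (nash_total_cost_le hd0 hd1 valid common nash) _.
have K_ge0 : 0 <= 1 + 2 / (1 - decay d) by rewrite addr_ge0 ?divr_ge0 // ltW.
rewrite ler_wpM2l // cost_card_le_total_cost // => j.
by have := valid j; have := sstar_feasible j; lia.
Qed.
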